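(* Let $\ell\in\mathbb{Z}_{\ge 2}$ and let $a_{n,m}$ and $b_{n,m}=b_{n,m}(\ell)$ be as in the context. Then $$\sum_{\substack{m\ge0,\ m\equiv \ell-2\bmod\ell\\ n\ge \ell-2}} b_{n,m}x^n \;=\; \frac{1+x\sum_{\substack{m\ge0,\ m\equiv \ell-1\bmod\ell\\ n\ge \ell-1}} a_{n,m}x^n}{x\,U_{\ell-1}\big(\tfrac{1}{2x}\big)}.$$
   Context: $U_j$ is the $j$th Chebyshev polynomial of the second kind: $U_0(x)=1$, $U_1(x)=2x$, $U_j(x)=2xU_{j-1}(x)-U_{j-2}(x)$. For $n,m\in\mathbb{Z}_{\ge 0}$, $a_{n,m}$ is the number of unit step paths $(x_0,\dots,x_n)$ on $\mathbb{Z}_{\ge0}$ (integers $x_i\ge0$, $|x_i-x_{i-1}|=1$) with $x_0=0$, $x_n=m$. For fixed $\ell\in\mathbb{Z}_{\ge2}$, $b_{n,m}=b_{n,m}(\ell)$ is defined by: $b_{n,m}=a_{n,m}$ if $m\equiv-1\pmod\ell$; $b_{n,m}=b_{n-1,m-1}+b_{n-1,m+1}$ if $m\equiv m_0\pmod\ell$ with $0\le m_0<\ell-2$; $b_{n,m}=b_{n-1,m-1}$ if $m\equiv-2\pmod\ell$; the recursion is used for $n\ge1$ with $b_{0,0}=1$, $b_{0,m}=0$ for $m>0$, and $b_{n,-1}=0$. The identity is one of formal Laurent series in $x$ (the right-hand side being expanded as a power series in $x$). *)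

From HB Require Import structures.
From mathcomp Require Import all_boot all_order all_algebra.
Set Implicit Arguments. Unset Strict Implicit. Unset Printing Implicit Defensive.
Import Order.TTheory GRing.Theory Num.Theory.
Local Open Scope ring_scope.

Fixpoint Ucheb (j : nat) : {poly rat} :=
  match j with
  | 0%N => 1
  | 1%N => 2%:R *: 'X
  | (S ((S j'') as j')) => 2%:R *: 'X * Ucheb j' - Ucheb j''
  end.

Definition stepPos (n : nat) (s : {ffun 'I_n -> bool}) (k : nat) : int :=
  \sum_(i < n | (i < k)%N) (if s i then 1 else -1).

(* a_{n,m}: number of unit step paths (x_0,...,x_n) on Z_{>=0} with x_0 = 0, x_n = m;
   such a path is determined by its sequence of n steps. *)
Definition apath (n m : nat) : nat :=
  #|[pred s : {ffun 'I_n -> bool} |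
      [forall k : 'I_n.+1, 0 <= stepPos s k] && (stepPos s n == m%:Z)]|.

(* b_{n,m}(l), with the convention b_{n,-1} = 0. *)
Fixpoint bcount (l n m : nat) {struct n} : nat :=
  if (m %% l == l - 1)%N then apath n m
  else match n with
       | 0%N => (m == 0%N : nat)
       | S n' =>
         let left := (if m is S m' then bcount l n' m' else 0%N) in
         if (m %% l == l - 2)%N then left
         else (left + bcount l n' m.+1)%N
       end.

(* Formal Laurent series over rat: x^v * (sum_k s k x^k). *)
Record laurent := Laurent { lval : int; lser : nat -> rat }.

Definition lcoef (f : laurent) (n : int) : rat :=
  match n - lval f with Posz k => lser f k | Negz _ => 0 end.

Definition lmul (f g : laurent) : laurent :=
  Laurent (lval f + lval g)
          (fun n => \sum_(k < n.+1) lser f k * lser g (n - k)%N).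

Definition leqL (f g : laurent) : Prop := forall n : int, lcoef f n = lcoef g n.

Definition lX : laurent := Laurent 1 (fun k => if k == 0%N then 1 else 0).

(* p(c/x) as a Laurent (poly)nomial in x, for p : {poly rat} of degree d:
   sum_{i<=d} p_i c^i x^{-i} = x^{-d} sum_{j<=d} p_{d-j} c^{d-j} x^j. *)
Definition poly_at_cinv (p : {poly rat}) (c : rat) : laurent :=
  let d := (size p).-1 in
  Laurent (- (d%:Z)) (fun j => if (j <= d)%N then p`_(d - j) * c ^+ (d - j) else 0).

(* LHS: sum over m >= 0, m = l-2 mod l, n >= l-2 of b_{n,m} x^n.
   (b_{n,m} = 0 for m > n, so the inner sum over m is over m <= n.) *)
Definition lhs_series (l : nat) : laurent :=
  Laurent 0 (fun n => if (l - 2 <= n)%N then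
                        \sum_(m < n.+1 | (m %% l == l - 2)%N) ((bcount l n m)%:R : rat)
                      else 0).

(* Numerator: 1 + x * sum over m = l-1 mod l, n >= l-1 of a_{n,m} x^n. *)
Definition num_series (l : nat) : laurent :=
  Laurent 0 (fun n => match n with
                      | 0%N => 1
                      | S n' => if (l - 1 <= n')%N then
                                  \sum_(m < n'.+1 | (m %% l == l - 1)%N) ((apath n' m)%:R : rat)
                                else 0
                      end).

Definition den_series (l : nat) : laurent :=
  lmul lX (poly_at_cinv (Ucheb l.-1) (2%:R)^-1).

(* Cut the levels m >= 0 into blocks kl, ..., kl + l - 1.  In the k-th block let
   D_j(x) = sum_n b_{n, kl+l-1-j} x^n for 1 <= j <= l - 1, and D_0 = 0 (level kl + l - 1
   never feeds the recursion of level kl + l - 2).  The recursion for b reads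
   x D_{j+1} = D_j - x D_{j-1}, the recurrence of P_N(x) = x^N U_N(1/(2x)) so that
   x^{l-2} (D_{l-1} - x D_{l-2}) = P_{l-1} D_1.  On the left stands, once more by the
   recursion, [k = 0] + x sum_n a_{n, kl-1} x^n, and D_1 is the series of level kl + l - 2.
   Summing over k gives x^{l-2} (1 + x sum a x^n) = P_{l-1} (sum b x^n), and
   x U_{l-1}(1/(2x)) = x^{2-l} P_{l-1}. *)

From HB Require Import structures.
From mathcomp Require Import all_boot all_order all_algebra.
From mathcomp Require Import zify ring.
Set Implicit Arguments. Unset Strict Implicit. Unset Printing Implicit Defensive.
Import Order.TTheory GRing.Theory Num.Theory.
Local Open Scope ring_scope.

(* P_N of the header. *)
Fixpoint Ucheb_rev {R : nzRingType} (N : nat) : {poly R} :=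
  match N with
  | 0%N | 1%N => 1
  | (S ((S N'') as N')) => Ucheb_rev N' - 'X^2 * Ucheb_rev N''
  end.
Arguments Ucheb_rev : simpl never.

Lemma Ucheb_revSS (R : nzRingType) N :
  Ucheb_rev N.+2 = Ucheb_rev N.+1 - 'X^2 * Ucheb_rev N :> {poly R}.
Proof. by []. Qed.

Section SeriesTimesPolynomial.
Variable R : nzRingType.
Implicit Types (s t : nat -> R) (p q : {poly R}).

Definition shift k s n : R := if (k <= n)%N then s (n - k)%N else 0.

Definition convp s p n : R := \sum_(i < n.+1) s i * p`_(n - i).

Lemma eq_shift k {s t n} : (forall m, (m <= n)%N -> s m = t m) -> shift k s n = shift k t n.
Proof. by move=> eq_st; rewrite /shift; case: ifP => // _; rewrite eq_st ?leq_subr. Qed.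

Lemma shift0 s : shift 0 s =1 s.
Proof. by move=> n; rewrite /shift subn0. Qed.

Lemma shiftD j k s : shift j (shift k s) =1 shift (j + k) s.
Proof.
move=> n; rewrite /shift; case: (leqP j n) => jn; case: (leqP (j + k) n) => jkn;
  case: (leqP k (n - j)) => kn //; try lia.
by rewrite subnDA.
Qed.

Lemma shiftB k s t : shift k (s \- t) =1 shift k s \- shift k t.
Proof. by move=> n; rewrite /shift /=; case: ifP; rewrite ?subr0. Qed.

Lemma shift_sum k (I : finType) (s : I -> nat -> R) n :
  shift k (fun m => \sum_i s i m) n = \sum_i shift k (s i) n.
Proof. by rewrite /shift; case: ifP => // _; rewrite big1. Qed.

Lemma convp1 s : convp s 1 =1 s.
Proof.
move=> n; rewrite /convp big_ord_recr /= subnn coefC mulr1 big1 ?add0r // => i _.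
by rewrite coefC subn_eq0 leqNgt ltn_ord mulr0.
Qed.

Lemma convpB s p q : convp s (p - q) =1 convp s p \- convp s q.
Proof. by move=> n; rewrite /convp /= -sumrB; apply: eq_bigr => i _; rewrite coefB mulrBr. Qed.

Lemma convp_mulXn s p k : convp s ('X^k * p) =1 shift k (convp s p).
Proof.
move=> n; rewrite /convp /shift; case: leqP => [kn|nk]; last first.
  by rewrite big1 // => i _; rewrite coefXnM ifT ?mulr0 //; lia.
rewrite (big_ord_widen n.+1 (fun i => s i * p`_(n - k - i))) ?ltnS ?leq_subr //.
rewrite [RHS]big_mkcond /=; apply: eq_bigr => i _; rewrite coefXnM ltnS.
have ilt := ltn_ord i; case: leqP => ik.
  by rewrite ifT ?[(n - i - k)%N]subnAC //; lia.
by rewrite ifF ?mulr0 //; lia.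
Qed.

Lemma convp_sum (I : finType) (s : I -> nat -> R) p n :
  convp (fun m => \sum_i s i m) p n = \sum_i convp (s i) p n.
Proof. by rewrite /convp exchange_big; apply: eq_bigr => i _; rewrite mulr_suml. Qed.

Section Chain.
Variables (N : nat) (D : nat -> nat -> R).
Hypothesis D0 : forall n, D 0%N n = 0.
Hypothesis DS : forall j, (0 < j < N)%N -> shift 1 (D j.+1) =1 D j \- shift 1 (D j.-1).

Let chain_diff j : (1 < j)%N ->
  shift j.-1 (D j) =1 convp (D 1) (Ucheb_rev j.-1) ->
  shift j.-2 (D j.-1) =1 convp (D 1) (Ucheb_rev j.-2) ->
  shift j.-1 (D j \- shift 1 (D j.-1)) =1 convp (D 1) (Ucheb_rev j).
Proof.
case: j => [|[|i]] // _ /= Dj Dj1 n.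
rewrite shiftB /= Dj shiftD addn1 -add2n -shiftD (eq_shift 2 (fun m _ => Dj1 m)).
by rewrite -convp_mulXn Ucheb_revSS convpB.
Qed.

Lemma shift_chain j : (0 < j <= N)%N -> shift j.-1 (D j) =1 convp (D 1) (Ucheb_rev j.-1).
Proof.
elim/ltn_ind: j => -[|[|[|i]]] // IH jN n.
- by rewrite shift0 convp1.
- by rewrite DS //= /shift D0 if_same subr0 convp1.
- have DSi : shift 1 (D i.+3) =1 D i.+2 \- shift 1 (D i.+1) by apply: DS; lia.
  rewrite /= -{1}(addn1 i.+1) -shiftD (eq_shift i.+1 (fun m _ => DSi m)).
  by apply: chain_diff => //; apply: IH; lia.
Qed.

Lemma shift_chain_top : (0 < N)%N ->
  shift N.-1 (D N \- shift 1 (D N.-1)) =1 convp (D 1) (Ucheb_rev N).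
Proof.
case: N shift_chain => [|[|M]] // chain _ n.
  by rewrite shift0 /= /shift D0 if_same subr0 convp1.
by apply: chain_diff => //=; apply: chain; lia.
Qed.

End Chain.
End SeriesTimesPolynomial.

Arguments Ucheb : simpl never.

Lemma UchebSS j : Ucheb j.+2 = 2%:R *: 'X * Ucheb j.+1 - Ucheb j.
Proof. by []. Qed.

Lemma coef_UchebSS j k :
  (Ucheb j.+2)`_k = (if k is k'.+1 then 2 * (Ucheb j.+1)`_k' else 0) - (Ucheb j)`_k.
Proof. by rewrite UchebSS coefB -scalerAl coefZ coefXM; case: k => [|k]; rewrite ?mulr0. Qed.

Lemma size_Ucheb j : size (Ucheb j) = j.+1.
Proof.
have size_2XM (p : {poly rat}) : p != 0 -> size (2%:R *: 'X * p) = (size p).+1.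
  by move=> p0; rewrite -scalerAl size_scale ?pnatr_eq0 // mulrC size_mulX.
elim/ltn_ind: j => -[|[|j]] IH.
- exact: size_poly1.
- by rewrite -[Ucheb 1]mulr1 size_2XM ?size_poly1 ?oner_neq0.
- rewrite UchebSS size_polyDl ?size_polyN size_2XM -?size_poly_gt0 ?IH //.
Qed.

Lemma coef_Ucheb_rev N j : (Ucheb_rev N : {poly rat})`_j =
  if (j <= N)%N then (Ucheb N)`_(N - j) * 2%:R^-1 ^+ (N - j) else 0.
Proof.
elim/ltn_ind: N j => -[|[|i]] IH j.
- rewrite (_ : Ucheb_rev 0 = 1) // (_ : Ucheb 0 = 1) // coef1.
  by case: j => [|j]; rewrite ?coef1 ?mulr1.
- rewrite (_ : Ucheb_rev 1 = 1) // (_ : Ucheb 1 = 2%:R *: 'X) // coef1 coefZ coefX.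
  by case: j => [|[|j]].
have Ui_gt k : (i < k)%N -> (Ucheb i)`_k = 0.
  by move=> ik; rewrite nth_default // size_Ucheb.
rewrite Ucheb_revSS coefB coefXnM !IH //.
case: (ssrnat.ltngtP j i.+2) => [ji|ij|->].
- have [t ti ->] : exists2 t, (t <= i.+1)%N & j = (i.+1 - t)%N.
    by exists (i.+1 - j)%N; lia.
  rewrite (_ : i.+2 - (i.+1 - t) = t.+1)%N; last by lia.
  rewrite coef_UchebSS ifT; last by lia.
  rewrite (_ : i.+1 - (i.+1 - t) = t)%N; last by lia.
  case: ltnP => j2.
    by rewrite Ui_gt ?subr0; [rewrite exprS; field | lia].
  rewrite ifT; last by lia.
  by rewrite (_ : i - (i.+1 - t - 2) = t.+1)%N ?exprS; [field | lia].
- by rewrite !ifF ?subr0 //; lia.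
- by rewrite ltnn !subSS subn0 leqnn !subnn coef_UchebSS !expr0 !sub0r !mulr1.
Qed.

Lemma stepPos_le n (s : {ffun 'I_n -> bool}) : stepPos s n <= n%:Z.
Proof.
rewrite /stepPos (eq_bigl xpredT) => [|i]; last by rewrite ltn_ord.
apply: le_trans (_ : \sum_(i < n) (1 : int) <= _).
  by apply: ler_sum => i _; case: (s i).
by rewrite sumr_const card_ord natz.
Qed.

Lemma apath_small n m : (n < m)%N -> apath n m = 0%N.
Proof.
move=> nm; apply: eq_card0 => s; rewrite inE; apply/negP => /andP[_ /eqP sm].
by have := stepPos_le s; rewrite sm lez_nat leqNgt nm.
Qed.

Lemma bcount_apath l n m : (m %% l = l - 1)%N -> bcount l n m = apath n m.
Proof. by move=> /eqP ml; case: n => [|n] /=; rewrite ml. Qed.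

Lemma bcount0 l m : (m %% l != l - 1)%N -> bcount l 0 m = (m == 0%N) :> nat.
Proof. by move=> /negbTE /= ->. Qed.

Lemma bcountS l n m : (m %% l != l - 1)%N -> bcount l n.+1 m =
  ((if m is m'.+1 then bcount l n m' else 0) +
   (if (m %% l == l - 2)%N then 0 else bcount l n m.+1))%N.
Proof. by move=> /negbTE /= ->; case: ifP; rewrite ?addn0. Qed.

Arguments bcount : simpl never.

Lemma bcount_small l n m : (n < m)%N -> bcount l n m = 0%N.
Proof.
elim: n m => [|n IH] m nm; case: (eqVneq (m %% l) (l - 1))%N => [/bcount_apath -> | res].
- exact: apath_small.
- by rewrite bcount0 //; case: m nm res.
- exact: apath_small.
- by rewrite bcountS //; case: m nm {res} => [//|m] nm; rewrite !IH ?if_same //; lia.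
Qed.

(* The series D_j of block k. *)
Definition bseq l k j n : rat :=
  if j is 0%N then 0 else (bcount l n (k * l + (l.-1 - j)))%:R.
Arguments bseq : simpl never.

Lemma bseq_rec l k j : (0 < j < l.-1)%N ->
  shift 1 (bseq l k j.+1) =1 bseq l k j \- shift 1 (bseq l k j.-1).
Proof.
move=> jl n; rewrite /= /bseq; case: j jl => [//|j] jl.
have res_m : ((k * l + (l.-1 - j.+1)) %% l = l.-1 - j.+1)%N by rewrite modnMDl modn_small; lia.
have m_pos : (k * l + (l.-1 - j.+1) = (k * l + (l.-1 - j.+2)).+1)%N by lia.
case: n => [|n].
  by rewrite /shift /= subr0 bcount0 m_pos // -m_pos res_m; lia.
rewrite /shift /= !subn1 /= bcountS res_m; last by lia.
rewrite {1}m_pos natrD /=; case: j jl m_pos res_m => [|j] jl m_pos res_m.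
  by rewrite ifT ?addn0 ?subr0 //; lia.
rewrite ifF; last by lia.
by rewrite (_ : (k * l + (l.-1 - j.+2)).+1 = k * l + (l.-1 - j.+1))%N ?addrK //; lia.
Qed.

Lemma bseq_top l k n : (1 < l)%N ->
  (bseq l k l.-1 \- shift 1 (bseq l k l.-2)) n =
  (if n is n'.+1 then if k is k'.+1 then apath n' (k' * l + l.-1) else 0%N
   else k == 0%N)%:R.
Proof.
case: l => [|[|l]] // _.
have res0 : (k * l.+2 %% l.+2 = 0)%N by rewrite modnMl.
have col_top m : bseq l.+2 k l.+1 m = (bcount l.+2 m (k * l.+2))%:R.
  by rewrite /bseq subnn addn0.
case: n => [|n]; rewrite /shift /= col_top.
  by rewrite subr0 bcount0 ?res0 // muln_eq0 orbF.
have col_next : (if 0%N == (l.+2 - 2)%N then 0%N else bcount l.+2 n (k * l.+2).+1)%:R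
                = bseq l.+2 k l n.
  by case: l {res0 col_top} => [|l] //; rewrite /bseq /= subSnn addn1.
rewrite subn1 bcountS res0 // natrD col_next addrK.
case: k {res0 col_top col_next} => [|k]; first by rewrite mul0n.
by rewrite mulSn addnC addnS bcount_apath ?modnMDl ?modn_small.
Qed.

Lemma den_series_coef l j : lser (den_series l) j = (Ucheb_rev l.-1)`_j.
Proof.
rewrite /= big_ord_recl /= mul1r big1 ?addr0 => [|i _]; last by rewrite mul0r.
by rewrite coef_Ucheb_rev size_Ucheb subn0.
Qed.

Lemma leqL_shift (f g : laurent) d : lval f + d%:Z = lval g ->
  (forall n, lser f n = shift d (lser g) n) -> leqL f g.
Proof.
move=> fg fgS z; rewrite /lcoef -fg opprD addrA.
case: (z - lval f) => [n|n]; last first.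
  by have [k ->] : exists k, Negz n - d%:Z = Negz k by exists (n + d)%N; rewrite !NegzE; lia.
rewrite fgS /shift; case: leqP => dn; first by rewrite subzn.
by have [k ->] : exists k, n%:Z - d%:Z = Negz k by exists (d - n.+1)%N; rewrite NegzE; lia.
Qed.

Lemma sum_residue_class (V : nmodType) l r K (g : nat -> V) : (r < l)%N ->
  \sum_(m < K * l | (m %% l == r)%N) g m = \sum_(k < K) g (k * l + r)%N.
Proof.
move=> rl; elim: K => [|K IH]; first by rewrite !big_ord0.
rewrite mulSnr big_split_ord /= IH big_ord_recr /=; congr (_ + _).
rewrite (bigD1 (Ordinal rl)) /= ?modnMDl ?modn_small // big1 ?addr0 // => i /andP[].
by rewrite modnMDl modn_small // => /eqP ir /eqP[]; apply: val_inj.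
Qed.

Lemma sum_residue_class_le (V : nmodType) l r n K (g : nat -> V) :
  (r < l)%N -> (n < K)%N -> (forall m, (n < m)%N -> g m = 0) ->
  \sum_(m < n.+1 | (m %% l == r)%N) g m = \sum_(k < K) g (k * l + r)%N.
Proof.
move=> rl nK g0; rewrite -sum_residue_class //.
rewrite (big_ord_widen_cond (K * l)%N (fun m => m %% l == r)%N g); last first.
  by rewrite (leq_trans nK) // leq_pmulr //; lia.
rewrite [RHS](bigID (fun m : 'I__ => (m < n.+1)%N)) /= [X in _ + X]big1 ?addr0 //.
by move=> m /andP[_]; rewrite -leqNgt => /g0.
Qed.

Lemma lhs_series_blocks l i K : (1 < l)%N -> (i < K)%N ->
  lser (lhs_series l) i = \sum_(k < K) bseq l k 1 i.
Proof.
move=> l1 iK; rewrite /= /bseq (_ : l.-1 - 1 = l - 2)%N; last by lia.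
case: ifP => li; last by rewrite big1 // => k _; rewrite bcount_small //; lia.
apply: (sum_residue_class_le (g := fun m => (bcount l i m)%:R)) => //; first by lia.
by move=> m im; rewrite bcount_small.
Qed.

Lemma num_series_blocks l p K : (1 < l)%N -> (p < K)%N ->
  lser (num_series l) p = \sum_(k < K) (bseq l k l.-1 \- shift 1 (bseq l k l.-2)) p.
Proof.
move=> l1; under eq_bigr do rewrite bseq_top //.
case: K => [//|K] pK; rewrite big_ord_recl /=.
case: p pK => [|n] nK; first by rewrite big1 ?addr0.
rewrite add0r (_ : l.-1 = l - 1)%N; last by lia.
case: ifP => ln; last by rewrite big1 // => k _; rewrite apath_small //; lia.
apply: (sum_residue_class_le (g := fun m => (apath n m)%:R)) => //; first by lia.
by move=> m nm; rewrite apath_small.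
Qed.

Theorem lemma2p10 (l : nat) (hl : (2 <= l)%N) :
  leqL (lmul (lhs_series l) (den_series l)) (num_series l).
Proof.
apply: (@leqL_shift _ _ l.-2); first by rewrite /= size_Ucheb /= add0r; lia.
move=> n; rewrite /lmul /=.
have lhs_den : \sum_(i < n.+1) lser (lhs_series l) i * lser (den_series l) (n - i)
             = convp (fun i => \sum_(k < n.+1) bseq l k 1 i) (Ucheb_rev l.-1) n.
  by apply: eq_bigr => i _; rewrite den_series_coef (lhs_series_blocks hl (ltn_ord i)).
have num_blocks m : (m <= n)%N -> lser (num_series l) m =
    \sum_(k < n.+1) (bseq l k l.-1 \- shift 1 (bseq l k l.-2)) m.
  by move=> mn; apply: num_series_blocks.
rewrite lhs_den convp_sum (eq_shift l.-2 num_blocks) shift_sum.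
apply: eq_bigr => k _; symmetry; apply: shift_chain_top => //; last by lia.
exact: bseq_rec.
Qed.
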